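(* Let $\Theta\subset\{1,\dots,n\}$ be non-empty. If $\Theta$ contains an odd integer, then the flag manifold $\mathcal F_\Theta$ of $\mathrm{Sp}(2n,\mathbb R)$ has Property (I).
   Context: $Je_i=(-1)^ie_{2n-i+1}$, $\omega(x,y)=x^TJy$, $\mathrm{Sp}(2n,\mathbb R)=\{g:g^TJg=J\}$. $\mathcal F_\Theta$ is the space of isotropic $\Theta$-flags $(V^i)_{i\in\Theta}$ ($V^i$ $\omega$-isotropic, $\dim V^i=i$, nested); flags $V,W$ are antipodal if $V^i\oplus (W^i)^{\perp_\omega}=\mathbb R^{2n}$ for all $i\in\Theta$, and $C(\tau)$ is the set of flags antipodal to $\tau$. $\tau_\Theta^i=\mathrm{Span}\{e_1,\dots,e_i\}$, $(\tau_\Theta^{\rm opp})^i=\mathrm{Span}\{e_{2n},\dots,e_{2n-i+1}\}$; $U_\Theta$ is the unipotent radical of the stabilizer $P_\Theta$ of $\tau_\Theta$, and each $\tau\in C(\tau_\Theta)$ is uniquely $u_\tau\tau^{\rm opp}_\Theta$ with $u_\tau\in U_\Theta$. The inversion map $\iota:C(\tau_\Theta)\to C(\tau_\Theta)$ is $\iota(\tau)=u_\tau^{-1}\tau^{\rm opp}_\Theta$; it preserves $C(\tau_\Theta)\cap C(\tau^{\rm opp}_\Theta)$. $\mathcal F_\Theta$ has Property (I) if $\iota$ leaves no connected component of $C(\tau_\Theta)\cap C(\tau^{\rm opp}_\Theta)$ invariant. *)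

From HB Require Import structures.
From mathcomp Require Import all_boot all_order all_algebra.
From mathcomp Require Import all_classical all_reals all_analysis.
Set Implicit Arguments. Unset Strict Implicit. Unset Printing Implicit Defensive.
Import Order.TTheory GRing.Theory Num.Theory.
Import numFieldNormedType.Exports.
Local Open Scope classical_set_scope.
Local Open Scope ring_scope.

(* Conventions: vectors of R^{2n} are ROW vectors 'rV_(n.*2); a linear subspace
   is the row space of a square matrix (mxalgebra, %MS scope).  A matrix g acts
   on column vectors x |-> g x, hence on row vectors v |-> v *m g^T, and on a
   subspace with row-matrix M by M |-> M *m g^T.  Indices are 0-based:
   the basis vector e_(a+1) of the paper is delta_mx 0 a. *)

Section SpDefs.
Variables (R : realType) (n : nat).
Local Notation N := (n.*2).
Local Notation M := 'M[R]_N.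

(* J e_i = (-1)^i e_{2n-i+1}: column b (i = b+1) has entry (-1)^(b+1) in row 2n-1-b. *)
Definition Jmat : M :=
  \matrix_(a < N, b < N) (if (a + b == N.-1)%N then (-1) ^+ b.+1 else 0).

Definition omega (x y : 'rV[R]_N) : R := (x *m Jmat *m y^T) 0 0.

Definition Sp : set M := [set g | g^T *m Jmat *m g = Jmat].

Definition isotropic (V : M) : Prop := V *m Jmat *m V^T = 0.

Definition operp (W : M) : M := kermx (Jmat *m W^T).

(* Points of Grassmannians are represented by orthogonal projection matrices
   (the standard embedding, which gives the Grassmannian its topology). *)
Definition is_oproj (P : M) : Prop := P^T = P /\ P *m P = P.

Definition oproj (A : M) : M := xget 0 [set P | is_oproj P /\ (P == A)%MS].

(* The space of (all) Theta-flags: families indexed by nat (with the product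
   topology), the i-th entry being the projection onto V^i for i in Theta and
   0 for i not in Theta. *)
Local Notation flagSpace := {ptws nat -> M}.

Definition is_flag (Theta : pred nat) (F : flagSpace) : Prop :=
  (forall i, Theta i -> [/\ is_oproj (F i), \rank (F i) = i & isotropic (F i)]) /\
  (forall i, ~~ Theta i -> F i = 0) /\
  (forall i j, Theta i -> Theta j -> (i <= j)%N -> (F i <= F j)%MS).

Definition FTheta (Theta : pred nat) : set flagSpace := [set F | is_flag Theta F].

Definition antipodal (Theta : pred nat) (V W : flagSpace) : Prop :=
  forall i, Theta i ->
    (V i + operp (W i) == (1%:M : M))%MS /\ (V i :&: operp (W i) == (0 : M))%MS.

Definition Cset (Theta : pred nat) (tau : flagSpace) : set flagSpace :=
  [set V | FTheta Theta V /\ antipodal Theta V tau].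

Definition Estd (i : nat) : M := \matrix_(a < N, b < N) (if (a == b) && (a < i)%N then 1 else 0).
Definition Eopp (i : nat) : M := \matrix_(a < N, b < N) (if (a == b) && (N - i <= a)%N then 1 else 0).

Definition tauTheta (Theta : pred nat) : flagSpace := fun i => if Theta i then Estd i else 0.
Definition tauOpp (Theta : pred nat) : flagSpace := fun i => if Theta i then Eopp i else 0.

Definition act (Theta : pred nat) (g : M) (F : flagSpace) : flagSpace :=
  fun i => if Theta i then oproj (F i *m g^T) else 0.

(* The self-dual partial flag of subspaces determined by tau_Theta:
   0, R^{2n}, tau^i and (tau^i)^{perp_omega} for i in Theta. *)
Definition chainSp (Theta : pred nat) : set M :=
  [set W | W = 0 \/ W = 1%:M \/
           exists i, Theta i /\ (W = Estd i \/ W = operp (Estd i))].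

(* U_Theta, the unipotent radical of the stabilizer P_Theta of tau_Theta in
   Sp(2n,R): the elements of Sp(2n,R) acting trivially on every successive
   quotient of the chain above, i.e. (g - 1) W <= W' whenever W' is the
   predecessor of W in the chain. *)
Definition Uunip (Theta : pred nat) : set M :=
  [set g | Sp g /\
     forall W W', chainSp Theta W -> chainSp Theta W' -> (W' < W)%MS ->
       (forall W'', chainSp Theta W'' -> ~ ((W' < W'')%MS && (W'' < W)%MS)) ->
       (W *m (g^T - 1%:M) <= W')%MS].

Definition u_of (Theta : pred nat) (tau : flagSpace) : M :=
  xget 1%:M [set u | Uunip Theta u /\ act Theta u (tauOpp Theta) = tau].

Definition iota (Theta : pred nat) (tau : flagSpace) : flagSpace :=
  act Theta (invmx (u_of Theta tau)) (tauOpp Theta).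

Definition Sset (Theta : pred nat) : set flagSpace :=
  Cset Theta (tauTheta Theta) `&` Cset Theta (tauOpp Theta).

Definition PropertyI (Theta : pred nat) : Prop :=
  forall x, Sset Theta x ->
    iota Theta @` @connected_component (flagSpace : topologicalType) (Sset Theta) x
      <> @connected_component (flagSpace : topologicalType) (Sset Theta) x.

End SpDefs.

(* Fix an odd i in Theta and let lo, hi be the first and last i coordinates.
   For a flag F, write P for the orthogonal projection onto F^i = row space of
   a basis B, so that P = B^T Q B with Q invertible, and put
     blockdet P = det P[lo,hi] * det P[lo,lo]
                = det B[lo]^3 * det B[hi] * (det Q)^2.
   Antipodality of F to tau_Theta and to tau_Theta^opp makes det B[hi] and
   det B[lo] nonzero, so blockdet (F^i) has constant sign on each connected
   component of C(tau_Theta) /\ C(tau_Theta^opp).  For F = u tau^opp with u in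
   U_Theta, the sign of blockdet (F^i) is that of det u[lo,hi]^3 * det u[hi,hi],
   while iota F = u^-1 tau^opp, where u^-1 = -J u^T J, gives
   (-1)^i det u[lo,hi]^3 * det u[lo,lo] up to positive factors.  Since u
   preserves tau^i and is symplectic, det u[lo,lo] * det u[hi,hi] = 1, so for
   odd i the two signs differ and iota F lies in a different component. *)

From Pilot Require Import Defs.
From HB Require Import structures.
From mathcomp Require Import all_boot all_order all_algebra.
From mathcomp Require Import all_classical all_reals all_analysis.
From mathcomp Require Import zify ring lra.
Set Implicit Arguments. Unset Strict Implicit. Unset Printing Implicit Defensive.
Import Order.TTheory GRing.Theory Num.Theory.
Import numFieldNormedType.Exports.
Local Open Scope ring_scope.

Lemma mxsub_mul_supp (R : pzSemiRingType) m p q m' q' k (f : 'I_m' -> 'I_m)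
    (g : 'I_q' -> 'I_q) (t : 'I_k -> 'I_p) (P : pred 'I_p)
    (A : 'M[R]_(m, p)) (B : 'M[R]_(p, q)) :
  injective t -> (forall b, P b -> exists j, t j = b) ->
  (forall b, ~~ P b -> forall a c, A (f a) b * B b (g c) = 0) ->
  mxsub f g (A *m B) = mxsub f t A *m mxsub t g B.
Proof.
move=> t_inj t_onto AB0; apply/matrixP => a c; rewrite !mxE.
rewrite (bigID (mem [set t j | j in [set: 'I_k]])) /= [X in _ + X]big1 ?addr0.
  rewrite big_imset /=; last by move=> x y _ _; apply: t_inj.
  by apply: eq_big => [j|j _]; rewrite ?inE ?mxE.
move=> b tb; apply: AB0; apply: contra tb => /t_onto[j <-].
by rewrite imset_f ?inE.
Qed.

Lemma mxsubN (R : pzRingType) m p m' p' (f : 'I_m' -> 'I_m) (g : 'I_p' -> 'I_p)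
    (A : 'M[R]_(m, p)) :
  mxsub f g (- A) = - mxsub f g A.
Proof. by apply/matrixP => a b; rewrite !mxE. Qed.

Lemma detN (R : comPzRingType) k (A : 'M[R]_k) : \det (- A) = (-1) ^+ k * \det A.
Proof. by rewrite -scaleN1r detZ. Qed.

Section SymplecticForm.
Variables (R : realType) (n : nat).
Local Notation N := n.*2.
Local Notation J := (Jmat R n).

Lemma Jmat_supp (a b : 'I_N) : J a b != 0 -> (a + b = N.-1)%N.
Proof. by rewrite mxE; case: ifP => [/eqP //|_]; rewrite eqxx. Qed.

Lemma mulmx_Jmat m (A : 'M[R]_(m, N)) a c :
  (A *m J) a c = A a (rev_ord c) * (-1) ^+ c.+1.
Proof.
rewrite mxE (bigD1 (rev_ord c)) //= big1 ?addr0 => [|b b_neq]; rewrite mxE /=.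
  by rewrite ifT //; apply/eqP; have := ltn_ord c; lia.
rewrite ifF ?mulr0 //; apply: contraNF b_neq => /eqP bc.
by apply/eqP/val_inj => /=; have := ltn_ord c; lia.
Qed.

Lemma Jmat_sqr : J *m J = - 1%:M.
Proof.
apply/matrixP => a c; rewrite mulmx_Jmat !mxE /=.
have -> : (a + (N - c.+1) == N.-1)%N = (a == c).
  apply/eqP/eqP => [h|->]; [apply/val_inj => /=|];
  by have := ltn_ord a; have := ltn_ord c; lia.
case: eqP => _; last by rewrite mul0r oppr0.
rewrite -exprD -signr_odd (_ : (_ + _ = N.+1)%N); last by have := ltn_ord c; lia.
by rewrite /= odd_double expr1.
Qed.

Lemma Sp_invmx (u : 'M[R]_N) : Sp u ->
  u \in unitmx /\ invmx u = - (J *m u^T *m J).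
Proof.
rewrite /Sp /= => Spu.
have inv_u : - (J *m u^T *m J) *m u = 1%:M.
  by rewrite mulNmx -!mulmxA (mulmxA u^T) Spu Jmat_sqr opprK.
have [_ u_unit] := mulmx1_unit inv_u; split => //.
by rewrite -[LHS]mul1mx -inv_u -(mulmxA _ u) mulmxV // mulmx1.
Qed.

End SymplecticForm.

Section Blocks.
Variables (R : realType) (n i : nat).
Hypotheses (i_le_n : (i <= n)%N) (i_gt0 : (0 < i)%N).
Local Notation N := n.*2.
Local Notation J := (Jmat R n).

Lemma i_le_N : (i <= N)%N. Proof. lia. Qed.
Definition lo (a : 'I_i) : 'I_N := widen_ord i_le_N a.
Lemma hi_subproof (a : 'I_i) : (N - i + a < N)%N. Proof. have := ltn_ord a; lia. Qed.
Definition hi (a : 'I_i) : 'I_N := Ordinal (hi_subproof a).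

Lemma lo_inj : injective lo.
Proof. by move=> a b /(congr1 val) /= /val_inj. Qed.
Lemma hi_inj : injective hi.
Proof. by move=> a b /(congr1 val) /= ab; apply/val_inj => /=; lia. Qed.
Lemma lo_onto (b : 'I_N) : (b < i)%N -> exists j, lo j = b.
Proof. by move=> bi; exists (Ordinal bi); apply/val_inj. Qed.
Lemma hi_onto (b : 'I_N) : (N - i <= b)%N -> exists j, hi j = b.
Proof.
move=> bi; have lt : (b - (N - i) < i)%N by have := ltn_ord b; lia.
by exists (Ordinal lt); apply/val_inj => /=; lia.
Qed.

Lemma Jmat_lo_row (a : 'I_i) (b : 'I_N) : ~~ (N - i <= b)%N -> J (lo a) b = 0.
Proof.
move=> hb; apply/eqP; apply: contraNT hb => /Jmat_supp /=.
by have := ltn_ord a; lia.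
Qed.
Lemma Jmat_hi_row (a : 'I_i) (b : 'I_N) : ~~ (b < i)%N -> J (hi a) b = 0.
Proof.
move=> hb; apply/eqP; apply: contraNT hb => /Jmat_supp /=.
by have := ltn_ord a; have := ltn_ord b; lia.
Qed.
Lemma Jmat_hi_col (a : 'I_i) (b : 'I_N) : ~~ (b < i)%N -> J b (hi a) = 0.
Proof.
move=> hb; apply/eqP; apply: contraNT hb => /Jmat_supp /=.
by have := ltn_ord a; have := ltn_ord b; lia.
Qed.

Lemma mxsub_mul_lo m q m' q' (f : 'I_m' -> 'I_m) (g : 'I_q' -> 'I_q)
    (A : 'M[R]_(m, N)) (B : 'M[R]_(N, q)) :
  (forall b : 'I_N, ~~ (b < i)%N -> forall a c, A (f a) b * B b (g c) = 0) ->
  mxsub f g (A *m B) = mxsub f lo A *m mxsub lo g B.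
Proof. exact: mxsub_mul_supp lo_inj lo_onto. Qed.

Lemma mxsub_mul_hi m q m' q' (f : 'I_m' -> 'I_m) (g : 'I_q' -> 'I_q)
    (A : 'M[R]_(m, N)) (B : 'M[R]_(N, q)) :
  (forall b : 'I_N, ~~ (N - i <= b)%N -> forall a c, A (f a) b * B b (g c) = 0) ->
  mxsub f g (A *m B) = mxsub f hi A *m mxsub hi g B.
Proof. exact: mxsub_mul_supp hi_inj hi_onto. Qed.

Local Notation Jhl := (mxsub hi lo J).
Local Notation Jlh := (mxsub lo hi J).

Lemma det_Jhl_Jlh : \det Jhl * \det Jlh = (-1) ^+ i.
Proof.
have : mxsub hi hi (J *m J) = Jhl *m Jlh.
  by apply: mxsub_mul_lo => b b_ge a c; rewrite Jmat_hi_row ?mul0r.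
rewrite Jmat_sqr -det_mulmx => <-.
have -> : mxsub hi hi (- 1%:M : 'M[R]_N) = - 1%:M.
  by apply/matrixP => a b; rewrite !mxE (inj_eq hi_inj).
by rewrite detN det1 mulr1.
Qed.

Lemma det_Jlh_neq0 : \det Jlh != 0.
Proof.
apply/eqP => Jlh0; have /eqP := det_Jhl_Jlh.
by rewrite Jlh0 mulr0 eq_sym signr_eq0.
Qed.

Lemma Sp_det_diag_blocks (u : 'M[R]_N) : Sp u ->
  (forall (a : 'I_i) (b : 'I_N), ~~ (b < i)%N -> u b (lo a) = 0) ->
  \det (mxsub lo lo u) * \det (mxsub hi hi u) = 1.
Proof.
rewrite /Sp /= => Spu u_stab.
have E : Jlh = (mxsub lo lo u)^T *m Jlh *m mxsub hi hi u.
  have Ju : mxsub lo hi (J *m u) = Jlh *m mxsub hi hi u.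
    by apply: mxsub_mul_hi => b b_lt a c; rewrite Jmat_lo_row ?mul0r.
  rewrite -{1}Spu -mulmxA (mxsub_mul_lo (A := u^T)) ?Ju ?mulmxA ?trmx_mxsub //.
  by move=> b b_ge a c; rewrite mxE u_stab ?mul0r.
have := congr1 determinant E; rewrite !det_mulmx det_tr => h.
apply: (mulfI det_Jlh_neq0); rewrite mulr1 [RHS]h; ring.
Qed.

Lemma Sp_det_lohi_invmx (u : 'M[R]_N) : Sp u ->
  \det (mxsub lo hi (invmx u)) = (-1) ^+ i * \det Jlh ^+ 2 * \det (mxsub lo hi u).
Proof.
move=> /Sp_invmx[_ ->].
have Ju : mxsub lo lo (J *m u^T) = Jlh *m (mxsub lo hi u)^T.
  rewrite trmx_mxsub; apply: mxsub_mul_hi => b b_lt a c.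
  by rewrite Jmat_lo_row ?mul0r.
have JuJ : mxsub lo hi (J *m u^T *m J) = Jlh *m (mxsub lo hi u)^T *m Jlh.
  rewrite mxsub_mul_lo ?Ju // => b b_ge a c.
  by rewrite Jmat_hi_col ?mulr0.
by rewrite mxsubN detN JuJ !det_mulmx det_tr; ring.
Qed.

Lemma Sp_det_hihi_invmx (u : 'M[R]_N) : Sp u ->
  \det (mxsub hi hi (invmx u)) = \det (mxsub lo lo u).
Proof.
move=> /Sp_invmx[_ ->].
have Ju : mxsub hi lo (J *m u^T) = Jhl *m (mxsub lo lo u)^T.
  rewrite trmx_mxsub; apply: mxsub_mul_lo => b b_ge a c.
  by rewrite Jmat_hi_row ?mul0r.
have JuJ : mxsub hi hi (J *m u^T *m J) = Jhl *m (mxsub lo lo u)^T *m Jlh.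
  rewrite mxsub_mul_lo ?Ju // => b b_ge a c.
  by rewrite Jmat_hi_col ?mulr0.
rewrite mxsubN detN JuJ !det_mulmx det_tr.
transitivity ((-1) ^+ i * (\det Jhl * \det Jlh) * \det (mxsub lo lo u)); first by ring.
by rewrite det_Jhl_Jlh -expr2 sqrr_sign mul1r.
Qed.

Lemma det_lohi1 : \det (mxsub lo hi (1%:M : 'M[R]_N)) = 0.
Proof.
have -> : mxsub lo hi (1%:M : 'M[R]_N) = 0.
  apply/matrixP => a b; rewrite !mxE; case: eqP => // /(congr1 val) /=.
  by have := ltn_ord a; lia.
by rewrite -(scale0r (1%:M : 'M[R]_i)) detZ det1 mulr1 expr0n eqn0Ngt i_gt0.
Qed.

End Blocks.

Section DiagonalProjection.
Variables (R : pzSemiRingType) (k : nat) (P : pred 'I_k).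

Lemma diag_pred_mulmx m (M : 'M[R]_(k, m)) a b :
  ((\matrix_(a, b) (if (a == b) && P a then 1 else 0) : 'M[R]_k) *m M) a b =
  if P a then M a b else 0.
Proof.
rewrite mxE (bigD1 a) //= big1 ?addr0 => [|c ca]; rewrite !mxE ?eqxx /=.
  by case: ifP; rewrite ?mul1r ?mul0r.
by rewrite eq_sym (negbTE ca) mul0r.
Qed.

Lemma mulmx_diag_pred m (M : 'M[R]_(m, k)) a b :
  (M *m (\matrix_(a, b) (if (a == b) && P a then 1 else 0) : 'M[R]_k)) a b =
  if P b then M a b else 0.
Proof.
rewrite mxE (bigD1 b) //= big1 ?addr0 => [|c cb]; rewrite !mxE ?eqxx /=.
  by case: ifP; rewrite ?mulr1 ?mulr0.
by rewrite (negbTE cb) mulr0.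
Qed.

End DiagonalProjection.

Lemma colsub_det_neq0 (F : fieldType) N k (V W : 'M[F]_N) (B : 'M[F]_(k, N))
    (t : 'I_k -> 'I_N) :
  row_free B -> (B <= V)%MS -> (V :&: W <= (0 : 'M[F]_N))%MS ->
  (forall v : 'rV_N, (forall j, v 0 (t j) = 0) -> (v <= W)%MS) ->
  \det (colsub t B) != 0.
Proof.
move=> B_free BV VW0 W_t; apply/det0P => -[y y_neq0 yBt0].
have yB_t j : (y *m B) 0 (t j) = 0.
  by have := congr1 (fun M : 'rV_k => M 0 j) yBt0; rewrite mulmx_colsub !mxE.
have : (y *m B <= V :&: W)%MS.
  by rewrite sub_capmx (submx_trans (submxMl y B) BV) W_t.
move/submx_trans/(_ VW0); rewrite submx0 mulmx_free_eq0 //.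
exact/negP.
Qed.

Section Projections.
Variables (R : realType) (n : nat).
Local Notation N := n.*2.

(* [oproj] defaults to 0 when no orthogonal projection exists. *)
Lemma oprojP (A : 'M[R]_N) : (0 < \rank (oproj A))%N ->
  is_oproj (oproj A) /\ (oproj A == A)%MS.
Proof.
move=> rk_gt0; case: (pselect (exists P, is_oproj P /\ (P == A)%MS)) => [|noP].
  exact: xgetPex.
move: rk_gt0; rewrite /oproj xgetPN ?mxrank0 // => P PA.
by apply: noP; exists P.
Qed.

Lemma oproj_factor k (P : 'M[R]_N) (B : 'M[R]_(k, N)) :
  is_oproj P -> row_free B -> (P == B)%MS ->
  exists2 Q : 'M[R]_k, P = B^T *m Q *m B & Q \in unitmx.
Proof.
move=> [Psym Pid] B_free /andP[/submxP[K PK] /submxP[E BE]].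
have BP : B *m P = B by rewrite {1}BE -mulmxA Pid -BE.
have PQ : P = B^T *m (K^T *m K) *m B.
  by rewrite -{1}Pid -{1}Psym PK trmx_mul !mulmxA.
exists (K^T *m K) => //.
have BBQ : B *m B^T *m (K^T *m K) = 1%:M.
  apply: (row_free_inj B_free); rewrite /= mul1mx -[in RHS]BP.
  by rewrite [in RHS]PQ !mulmxA.
by case: (mulmx1_unit BBQ).
Qed.

End Projections.

Section FlagMinors.
Variables (R : realType) (n i : nat).
Hypotheses (i_le_n : (i <= n)%N) (i_gt0 : (0 < i)%N).
Local Notation N := n.*2.
Local Notation lo := (lo i_le_n i_gt0).
Local Notation hi := (hi i_le_n i_gt0).

Lemma Estd_mulmx m (M : 'M[R]_(N, m)) a b :
  (Estd R n i *m M) a b = if (a < i)%N then M a b else 0.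
Proof. exact: diag_pred_mulmx. Qed.

Lemma Eopp_mulmx m (M : 'M[R]_(N, m)) a b :
  (Eopp R n i *m M) a b = if (N - i <= a)%N then M a b else 0.
Proof. exact: diag_pred_mulmx. Qed.

Lemma Eopp_mulmx_eqmx (M : 'M[R]_N) : (Eopp R n i *m M == rowsub hi M)%MS.
Proof.
have hi_row j : row (hi j) (Eopp R n i *m M) = row j (rowsub hi M).
  by apply/rowP => b; rewrite [LHS]mxE Eopp_mulmx /= leq_addr !mxE.
apply/andP; split; last first.
  by apply/row_subP => j; rewrite -hi_row row_sub.
apply/row_subP => a.
case: (boolP (N - i <= a)%N) => [/(hi_onto i_le_n i_gt0)[j <-]|a_lo].
  by rewrite hi_row row_sub.
have -> : row a (Eopp R n i *m M) = 0.
  by apply/rowP => b; rewrite [LHS]mxE Eopp_mulmx (negbTE a_lo) mxE.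
exact: sub0mx.
Qed.

Lemma sub_operp_Estd (v : 'rV[R]_N) : (forall j, v 0 (hi j) = 0) ->
  (v <= operp (Estd R n i))%MS.
Proof.
move=> v_hi; rewrite /operp sub_kermx mulmxA -trmx_eq0 trmx_mul trmxK.
apply/eqP/matrixP => d a; rewrite Estd_mulmx [RHS]mxE.
case: ifP => // d_lt; rewrite mxE mulmx_Jmat [a]ord1.
have [j <-] : exists j, hi j = rev_ord d.
  by apply: (hi_onto i_le_n i_gt0) => /=; have := ltn_ord d; lia.
by rewrite v_hi mul0r.
Qed.

Lemma sub_operp_Eopp (v : 'rV[R]_N) : (forall j, v 0 (lo j) = 0) ->
  (v <= operp (Eopp R n i))%MS.
Proof.
move=> v_lo; rewrite /operp sub_kermx mulmxA -trmx_eq0 trmx_mul trmxK.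
apply/eqP/matrixP => d a; rewrite Eopp_mulmx [RHS]mxE.
case: ifP => // d_ge; rewrite mxE mulmx_Jmat [a]ord1.
have [j <-] : exists j, lo j = rev_ord d.
  by apply: (lo_onto i_le_n i_gt0) => /=; have := ltn_ord d; lia.
by rewrite v_lo mul0r.
Qed.

Definition blockdet (P : 'M[R]_N) : R :=
  \det (mxsub lo hi P) * \det (mxsub lo lo P).

Lemma blockdet_factor (P : 'M[R]_N) (B : 'M[R]_(i, N)) :
  is_oproj P -> row_free B -> (P == B)%MS ->
  exists2 q : R, q != 0 &
    blockdet P = \det (colsub lo B) ^+ 3 * \det (colsub hi B) * q ^+ 2.
Proof.
move=> P_proj B_free PB; have [Q -> Q_unit] := oproj_factor P_proj B_free PB.
exists (\det Q); first by rewrite -unitfE -unitmxE.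
by rewrite /blockdet !mxsub_mul mxsub_id -!trmx_mxsub !det_mulmx !det_tr; ring.
Qed.

Lemma blockdet_act_tauOpp (Theta : pred nat) (g : 'M[R]_N) : Theta i ->
  \rank (act Theta g (tauOpp R n Theta) i) = i ->
  exists q : R, blockdet (act Theta g (tauOpp R n Theta) i) =
    \det (mxsub lo hi g) ^+ 3 * \det (mxsub hi hi g) * q ^+ 2.
Proof.
rewrite /act /tauOpp => Ti; rewrite Ti /= => rk.
have [P_proj PA] : is_oproj (oproj (Eopp R n i *m g^T)) /\
    (oproj (Eopp R n i *m g^T) == Eopp R n i *m g^T)%MS.
  by apply: oprojP; rewrite rk.
have PB : (oproj (Eopp R n i *m g^T) == rowsub hi g^T)%MS.
  exact/eqmxP/(eqmx_trans (eqmxP PA) (eqmxP (Eopp_mulmx_eqmx _))).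
have B_free : row_free (rowsub hi g^T) by rewrite /row_free -(eqmx_rank PB) rk.
have [q _ ->] := blockdet_factor P_proj B_free PB; exists q.
have colsub_hi f : colsub f (rowsub hi g^T) = (mxsub f hi g)^T.
  by apply/matrixP => a b; rewrite !mxE.
by rewrite !colsub_hi !det_tr.
Qed.

Lemma blockdet_neq0 (Theta : pred nat) (F : {ptws nat -> 'M[R]_N}) :
  Sset Theta F -> Theta i -> blockdet (F i) != 0.
Proof.
move=> [[[F_flag _] antiT] [_ antiO]] Ti.
have [F_proj rk _] := F_flag i Ti.
have [B FB B_free] : exists2 B : 'M[R]_(i, N), (F i == B)%MS & row_free B.
  move: (row_base (F i)) (eq_row_base (F i)) (row_base_free (F i)).
  by rewrite rk => B /eqmx_sym/eqmxP FB B_free; exists B.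
have [q q_neq0 ->] := blockdet_factor F_proj B_free FB.
have [_ /andP[capT _]] := antiT i Ti; have [_ /andP[capO _]] := antiO i Ti.
rewrite /tauTheta /tauOpp Ti in capT capO.
have /andP[_ BF] := FB.
have lo_neq0 : \det (colsub lo B) != 0.
  exact: (colsub_det_neq0 (F := R)) B_free BF capO sub_operp_Eopp.
have hi_neq0 : \det (colsub hi B) != 0.
  exact: (colsub_det_neq0 (F := R)) B_free BF capT sub_operp_Estd.
by rewrite !mulf_neq0 ?expf_neq0.
Qed.

End FlagMinors.

Lemma chain_pred_exists (F : fieldType) N (S : set 'M[F]_N) (W0 W : 'M[F]_N) :
  S W0 -> (W0 < W)%MS ->
  exists W', [/\ S W', (W' < W)%MS &
    forall W'', S W'' -> ~ ((W' < W'')%MS && (W'' < W)%MS)].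
Proof.
move=> SW0 W0W.
pose P k := `[< exists W', [/\ S W', (W' < W)%MS & \rank W' = k] >].
have P_ex : exists k, P k by exists (\rank W0); apply/asboolP; exists W0.
have P_le k : P k -> (k <= N)%N by move=> /asboolP[W' [_ _ <-]]; apply: rank_leq_col.
case: (ex_maxnP P_ex P_le) => _ /asboolP[W' [SW' W'W <-]] W'_max.
exists W'; split => // W'' SW'' /andP[W'W'' W''W].
have : P (\rank W'') by apply/asboolP; exists W''.
by move/W'_max; rewrite leqNgt rank_ltmx.
Qed.

Section Unipotent.
Variables (R : realType) (n i : nat).
Hypotheses (i_le_n : (i <= n)%N) (i_gt0 : (0 < i)%N).
Local Notation N := n.*2.
Local Notation lo := (lo i_le_n i_gt0).

Lemma Estd_gt0 : ((0 : 'M[R]_N) < Estd R n i)%MS.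
Proof.
rewrite ltmxErank sub0mx mxrank0 lt0n mxrank_eq0 /=.
apply/eqP => /matrixP/(_ (lo (Ordinal i_gt0)) (lo (Ordinal i_gt0))) /eqP.
by rewrite !mxE eqxx /= i_gt0 oner_eq0.
Qed.

Lemma Uunip_Estd_stable (Theta : pred nat) (u : 'M[R]_N) :
  Uunip Theta u -> Theta i -> (Estd R n i *m u^T <= Estd R n i)%MS.
Proof.
move=> [_ u_chain] Ti; set W := Estd R n i.
have SW : chainSp Theta W by right; right; exists i; split => //; left.
have [W' [SW' W'W W'_cover]] :=
  chain_pred_exists (S := chainSp Theta) (or_introl erefl) Estd_gt0.
have Wu_sub := submx_trans (u_chain W W' SW SW' W'W W'_cover) (ltmxW W'W).
have -> : W *m u^T = W *m (u^T - 1%:M) + W by rewrite mulmxBr mulmx1 subrK.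
by rewrite addmx_sub.
Qed.

Lemma sub_Estd_entry (v : 'rV[R]_N) (b : 'I_N) :
  (v <= Estd R n i)%MS -> ~~ (b < i)%N -> v 0 b = 0.
Proof.
move=> /submxP[z ->] b_ge.
by rewrite (mulmx_diag_pred (fun c => c < i)%N) (negbTE b_ge).
Qed.

Lemma Uunip_lower_block (Theta : pred nat) (u : 'M[R]_N) :
  Uunip Theta u -> Theta i ->
  forall (a : 'I_i) (b : 'I_N), ~~ (b < i)%N -> u b (lo a) = 0.
Proof.
move=> Uu Ti a b b_ge.
have row_sub_Estd := submx_trans (row_sub (lo a) _) (Uunip_Estd_stable Uu Ti).
have := sub_Estd_entry row_sub_Estd b_ge.
by rewrite mxE Estd_mulmx /= ltn_ord mxE.
Qed.

End Unipotent.

Section InversionSign.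
Variables (R : realType) (n i : nat).
Hypotheses (i_le_n : (i <= n)%N) (i_gt0 : (0 < i)%N).
Local Notation N := n.*2.
Local Notation lo := (lo i_le_n i_gt0).
Local Notation hi := (hi i_le_n i_gt0).
Local Notation blockdet := (blockdet i_le_n i_gt0).

Lemma blockdet_iota_lt0 (Theta : pred nat) (x : {ptws nat -> 'M[R]_N}) :
  Theta i -> odd i -> Sset Theta x -> Sset Theta (Defs.iota Theta x) ->
  blockdet (x i) * blockdet (Defs.iota Theta x i) < 0.
Proof.
move=> Ti odd_i Sx Sy.
have rk_i (F : {ptws nat -> 'M[R]_N}) : Sset Theta F -> \rank (F i) = i.
  by case=> [[[F_flag _] _] _]; have [] := F_flag i Ti.
rewrite lt_neqAle mulf_neq0 ?(blockdet_neq0 _ _ Sx) ?(blockdet_neq0 _ _ Sy) //=.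
move: (rk_i _ Sy); rewrite /Defs.iota.
have [u_ex|no_u] :=
  pselect (exists u, Uunip Theta u /\ act Theta u (tauOpp R n Theta) = x).
  have [Uu ux] : Uunip Theta (u_of Theta x) /\
    act Theta (u_of Theta x) (tauOpp R n Theta) = x := xgetPex 1%:M u_ex.
  set u := u_of Theta x in Uu ux *; have [Sp_u _] := Uu.
  move=> rk_y; have [q1 ->] := blockdet_act_tauOpp i_le_n i_gt0 Ti rk_y.
  have rk_x : \rank (act Theta u (tauOpp R n Theta) i) = i by rewrite ux; apply: rk_i.
  have [q0] := blockdet_act_tauOpp i_le_n i_gt0 Ti rk_x; rewrite ux => ->.
  rewrite Sp_det_lohi_invmx // Sp_det_hihi_invmx //.
  rewrite -signr_odd odd_i expr1.
  have AD := Sp_det_diag_blocks Sp_u (Uunip_lower_block i_le_n i_gt0 Uu Ti).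
  set c := \det (mxsub lo hi u); set s := \det (mxsub lo hi (Jmat R n)).
  set A := \det (mxsub lo lo u); set D := \det (mxsub hi hi u).
  rewrite [X in X <= 0](_ : _ = - (c ^+ 3 * s ^+ 3 * q0 * q1) ^+ 2 * (A * D)).
    by rewrite AD mulr1 oppr_le0 sqr_ge0.
  by ring.
(* [u_of] defaults to 1, and then iota x = tau^opp, whose blockdet vanishes. *)
have -> : u_of Theta x = 1%:M by apply: xgetPN => u Uu; apply: no_u; exists u.
rewrite invmx1 => rk_y; have [q ->] := blockdet_act_tauOpp i_le_n i_gt0 Ti rk_y.
by rewrite det_lohi1 expr0n /= !mul0r mulr0.
Qed.

End InversionSign.

Local Open Scope classical_set_scope.

Lemma continuous_mxentry (T : topologicalType) m p (a : 'I_m) (b : 'I_p) :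
  continuous (fun M : 'M[T]_(m, p) => M a b).
Proof.
move=> M U /= MU.
exists (fun a' b' => if (a' == a) && (b' == b) then U else setT) => [a' b'|M' M'U].
  by case: ifP => [/andP[/eqP -> /eqP ->] //|_]; apply: filterT.
by have := M'U a b; rewrite !eqxx.
Qed.

Lemma continuous_det (R : realType) (T : topologicalType) k (h : T -> 'M[R]_k) :
  (forall a b, continuous (fun t => h t a b)) -> continuous (fun t => \det (h t)).
Proof.
move=> h_cont; apply: (continuous_big add_continuous) => s _ t.
apply: (continuousM (s := fun=> _)); first exact: cst_continuous.
by apply: (continuous_big mul_continuous) => a _; apply: h_cont.
Qed.

Lemma continuous_blockdet (R : realType) (n i : nat) (i_le_n : (i <= n)%N)
    (i_gt0 : (0 < i)%N) :
  continuous (blockdet i_le_n i_gt0 : 'M[R]_n.*2 -> R).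
Proof.
have det_cont k (f g : 'I_k -> 'I_n.*2) :
    continuous (fun M : 'M[R]_n.*2 => \det (mxsub f g M)).
  apply: continuous_det => a b.
  have -> : (fun M : 'M[R]_n.*2 => mxsub f g M a b) = (fun M => M (f a) (g b)).
    by apply: funext => M; rewrite mxE.
  exact: continuous_mxentry.
by move=> M; apply: continuousM (det_cont _ _ _ M) (det_cont _ _ _ M).
Qed.

Lemma connected_component_mul_gt0 (R : realType) (T : topologicalType)
    (f : T -> R) (A : set T) x y :
  continuous f -> (forall z, A z -> f z != 0) ->
  connected_component A x y -> 0 < f x * f y.
Proof.
move=> f_cont f_neq0 Cxy; set C := connected_component A x.
have Cx : C x.
  by apply: connected_component_refl; apply: (connected_component_sub (x := y));
     apply: connected_component_sym.
have fC : is_interval (f @` C).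
  apply/connected_intervalP; apply: connected_continuous_connected.
    exact: component_connected.
  exact: continuous_subspaceT.
have fx_neq0 := f_neq0 x (connected_component_sub Cx).
rewrite ltNge; apply/negP => fxy_le0.
have [z Cz fz0] : (f @` C) 0.
  have [fx_lt0|fx_gt0] := ltP (f x) 0.
    apply: (fC (f x) (f y)); [by exists x | by exists y | apply/andP; split; nra].
  apply: (fC (f y) (f x)); [by exists y | by exists x | apply/andP; split; nra].
by move: (f_neq0 z (connected_component_sub Cz)); rewrite fz0 eqxx.
Qed.

Theorem mainTheorem11 (R : realType) (n : nat) (Theta : pred nat) :
  (forall i, Theta i -> (1 <= i <= n)%N) ->
  (exists i, Theta i) ->
  (exists i, Theta i /\ odd i) ->
  PropertyI R n Theta.
Proof.
move=> Theta_range _ [i [Ti odd_i]] x Sx iota_C.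
have /andP[i_gt0 i_le_n] := Theta_range i Ti.
have Cxy : connected_component (Sset Theta) x (Defs.iota Theta x).
  by rewrite -iota_C; exists x => //; apply: connected_component_refl.
have blockdet_i_cont :
    continuous (blockdet i_le_n i_gt0 \o (fun F : {ptws nat -> 'M[R]_n.*2} => F i)).
  move=> F; apply: continuous_comp; first exact: proj_continuous.
  exact: continuous_blockdet.
have := connected_component_mul_gt0 blockdet_i_cont
  (fun F SF => blockdet_neq0 i_le_n i_gt0 SF Ti) Cxy.
rewrite ltNge => /negP; apply; apply/ltW/blockdet_iota_lt0 => //.
exact: connected_component_sub Cxy.
Qed.
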